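(* If $G$ is a diamond-necklace $N_k$ for some $k\ge 2$, then $m(G,2) = u(G)+1$ (that is, $m(N_k,2)=k+1$).
   Context: A diamond is a graph isomorphic to $K_4$ minus one edge. Diamond-necklace: for $k\ge 2$, take $k$ disjoint diamonds $D_1,\dots,D_k$ with $V(D_i)=\{a_i,b_i,c_i,d_i\}$ where $a_ib_i$ is the missing edge, and add the edges $a_ib_{i+1}$ for $i\in\{1,\dots,k-1\}$ and the edge $a_kb_1$; the result is $N_k$. For a connected claw-free cubic graph $G\ne K_4$, $V(G)$ is uniquely partitioned into sets inducing triangles or diamonds, called units; $u(G)$ is their number (for $N_k$, the units are the $k$ diamonds $D_i$). $r$-percolation: starting from a set $S$ of infected vertices, repeatedly infect any uninfected vertex having at least $r$ infected neighbors. $S$ is an $r$-percolating set if eventually all vertices are infected; $m(G,r)$ is the minimum cardinality of an $r$-percolating set of $G$. *)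

From mathcomp Require Import all_boot all_order.
Set Implicit Arguments. Unset Strict Implicit. Unset Printing Implicit Defensive.

(* Simple graphs: symmetric irreflexive relation on a finType. *)

Definition perc_step (T : finType) (e : rel T) (r : nat) (S : {set T}) : {set T} :=
  S :|: [set v | r <= #|[set w in S | e v w]|].

(* Final infected set: the process is monotone and stabilises within #|T| rounds. *)
Definition perc_closure (T : finType) (e : rel T) (r : nat) (S : {set T}) : {set T} :=
  iter #|T| (perc_step e r) S.

Definition percolating (T : finType) (e : rel T) (r : nat) (S : {set T}) : bool :=
  perc_closure e r S == [set: T].

(* m(G,r): minimum cardinality of an r-percolating set (V(G) itself percolates). *)
Definition m_perc (T : finType) (e : rel T) (r : nat) : nat :=
  \big[minn/#|T|]_(S : {set T} | percolating e r S) #|S|.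

(* Vertex (i, j): diamond D_i (0-based i < k), role j:
   0 = a_i, 1 = b_i, 2 = c_i, 3 = d_i.  Inside D_i all pairs are adjacent except
   a_i b_i; in addition a_i is adjacent to b_{i+1 mod k}. *)
Definition necklace_adj (k : nat) : rel ('I_k * 'I_4) :=
  fun x y =>
    let: (i, p) := x in let: (i', p') := y in
    ((i == i') && (p != p') && ~~ ([&& (p : nat) <= 1 & (p' : nat) <= 1]))
    || ([&& (p : nat) == 0, (p' : nat) == 1 & (i' : nat) == (i.+1 %% k)])
    || ([&& (p : nat) == 1, (p' : nat) == 0 & (i : nat) == (i'.+1 %% k)]).

Definition necklace_unit (k : nat) (i : 'I_k) : {set 'I_k * 'I_4} :=
  [set x | x.1 == i].

From mathcomp Require Import all_boot all_order.
From mathcomp Require Import zify.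
Import Order.TTheory.

Set Implicit Arguments.
Unset Strict Implicit.
Unset Printing Implicit Defensive.

(* Lower bound: orient every edge from its earlier-infected to its later-infected
   end, dropping edges inside one round.  A vertex outside a 2-percolating set S
   gets in-degree >= 2, hence out-degree <= 1 in a cubic graph, the last infected
   vertex has out-degree 0, and a vertex of S has out-degree <= 3.  Equating total
   in- and out-degree gives |V \ S| + 1 <= 3|S|, i.e. |S| > |V|/4 = k.
   Upper bound: the k vertices c_i together with d_0 percolate: a_0 and b_0 see
   c_0 and d_0; then b_(i+1) sees a_i and c_(i+1), d_(i+1) sees b_(i+1) and c_(i+1),
   and a_(i+1) sees c_(i+1) and d_(i+1). *)

Lemma card_set_sum (T : finType) (P : pred T) : #|[set w | P w]| = \sum_w P w.
Proof. by rewrite -sum1dep_card big_mkcond. Qed.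

Section Percolation.
Variables (T : finType) (e : rel T) (r : nat).

Lemma subset_perc_step (A : {set T}) : A \subset perc_step e r A.
Proof. exact: subsetUl. Qed.

Lemma perc_step_iter_stable n (A : {set T}) : #|T| <= n + #|A| ->
  perc_step e r (iter n (perc_step e r) A) = iter n (perc_step e r) A.
Proof.
elim: n A => [|n IHn] A leTA.
  have -> : A = [set: T] by apply/eqP; rewrite eqEcard subsetT cardsT.
  by apply/eqP; rewrite eqEsubset subsetT subset_perc_step.
rewrite iterSr; have [fixA|growA] := eqVneq (perc_step e r A) A.
  have iterA m : iter m (perc_step e r) A = A by elim: m => //= m ->.
  by rewrite fixA iterA.
apply: IHn; apply: leq_trans leTA _; rewrite addSnnS leq_add2l.
by apply: proper_card; rewrite properEneq eq_sym growA subset_perc_step.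
Qed.

Lemma perc_closure_closed (S : {set T}) v :
  r <= #|[set w in perc_closure e r S | e v w]| -> v \in perc_closure e r S.
Proof.
rewrite /perc_closure -{2}(@perc_step_iter_stable #|T| S) ?leq_addr //.
by move=> many_nbrs; rewrite inE in_set many_nbrs orbT.
Qed.

Lemma subset_perc_closure (S : {set T}) : S \subset perc_closure e r S.
Proof.
rewrite /perc_closure; elim: #|T| => //= n IHn.
exact: subset_trans IHn (subset_perc_step _).
Qed.

Lemma m_perc_le (S : {set T}) : percolating e r S -> m_perc e r <= #|S|.
Proof. by rewrite /m_perc -minEnat => /(bigmin_le_cond _ (fun S : {set T} => #|S|)). Qed.

Lemma m_perc_ge n : n <= #|T| -> (forall S, percolating e r S -> n <= #|S|) ->
  n <= m_perc e r.
Proof.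
by move=> leTn leSn; apply: (big_ind (leq n) leTn _ leSn) => x y; rewrite leq_min => -> ->.
Qed.

End Percolation.

Lemma mem_perc_closure2 (T : finType) (e : rel T) (S : {set T}) v x y :
  x != y -> e v x -> e v y ->
  x \in perc_closure e 2 S -> y \in perc_closure e 2 S -> v \in perc_closure e 2 S.
Proof.
move=> neq_xy evx evy xC yC; apply: perc_closure_closed.
have xy_nbrs : [set x; y] \subset [set w in perc_closure e 2 S | e v w].
  by apply/subsetP => w; rewrite !inE => /orP[]/eqP->; rewrite ?xC ?yC ?evx ?evy.
by apply: leq_trans (subset_leq_card xy_nbrs); rewrite cards2 neq_xy.
Qed.

Section DegreeCounting.
Variables (T : finType) (e : rel T) (d r : nat).
Hypotheses (e_sym : symmetric e) (e_deg : forall v, #|[set w | e v w]| <= d).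

Lemma percolation_count (t : T -> nat) (S : {set T}) (z : T) :
  (forall v, v \notin S -> r <= #|[set w | e v w & t w < t v]|) ->
  z \notin S -> (forall w, t w <= t z) ->
  r * #|~: S| + (d - r) <= d * #|S| + (d - r) * #|~: S|.
Proof.
move=> many_earlier zS z_last.
pose earlier v := \sum_w (e v w && (t w < t v)).
pose later v := \sum_w (e v w && (t v < t w)).
have deg v : earlier v + later v <= d.
  rewrite -big_split /=; apply: leq_trans (e_deg v).
  by rewrite card_set_sum leq_sum // => w _; case: (e v w); case: ltngtP.
have later_z : later z = 0.
  by apply: big1 => w _; rewrite ltnNge z_last andbF.
have double_count : \sum_v earlier v = \sum_v later v.
  by rewrite exchange_big; apply: eq_bigr => v _; apply: eq_bigr => w _; rewrite e_sym.
have earlier_ge v : v \notin S -> r <= earlier v.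
  by move/many_earlier; rewrite /earlier -card_set_sum.
have vertex_bound v : r * (v \notin S) + later v + (d - r) * (v == z)
               <= earlier v + d * (v \in S) + (d - r) * (v \notin S).
  have := deg v; case: (eqVneq v z) => [->|_] /=.
    by rewrite (negbTE zS) later_z /=; have := earlier_ge z zS; lia.
  by case: (boolP (v \in S)) => vS /=; [|have := earlier_ge v vS]; lia.
have := leq_sum (index_enum T) (fun v (_ : true) => vertex_bound v).
rewrite !big_split /= -!big_distrr /= double_count.
have card_nS : \sum_v (v \notin S : nat) = #|~: S|.
  by rewrite -card_set_sum; apply: eq_card => v; rewrite !inE.
have card_S : \sum_v (v \in S : nat) = #|S|.
  by rewrite -card_set_sum; apply: eq_card => v; rewrite !inE.
have card_z : \sum_v (v == z : nat) = 1.
  by rewrite -(cards1 z) -card_set_sum; apply: eq_card => v; rewrite !inE.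
rewrite card_nS card_S card_z; lia.
Qed.

End DegreeCounting.

Section InfectionTime.
Variables (T : finType) (e : rel T) (r : nat) (S : {set T}).
Hypothesis percS : percolating e r S.

Local Notation round n := (iter n (perc_step e r) S).

Lemma exists_infection_round v : exists n, v \in round n.
Proof. by exists #|T|; rewrite -/(perc_closure e r S) (eqP percS) inE. Qed.

Definition infection_time v : nat := ex_minn (exists_infection_round v).

Lemma infection_timeP v : v \in round (infection_time v).
Proof. by rewrite /infection_time; case: ex_minnP. Qed.

Lemma infection_time_min v n : v \in round n -> infection_time v <= n.
Proof. by rewrite /infection_time; case: ex_minnP => m _ min_m /min_m. Qed.

Lemma infection_time_eq0 v : (infection_time v == 0) = (v \in S).
Proof.
apply/eqP/idP => [t0|vS]; first by have := infection_timeP v; rewrite t0.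
by apply/eqP; rewrite -leqn0 infection_time_min.
Qed.

Lemma infection_time_earlier_nbrs v : v \notin S ->
  r <= #|[set w | e v w & infection_time w < infection_time v]|.
Proof.
rewrite -infection_time_eq0; have := infection_timeP v.
case Et: (infection_time v) => [//|n] /= infected_at_Sn _.
have not_yet : v \notin round n by apply/negP => /infection_time_min; lia.
move: infected_at_Sn; rewrite inE (negbTE not_yet) inE => /leq_trans; apply.
apply/subset_leq_card/subsetP => w; rewrite !inE => /andP[w_in ->].
by rewrite ltnS infection_time_min.
Qed.

End InfectionTime.

Lemma percolating_card_lb (T : finType) (e : rel T) (d r : nat) (S : {set T}) :
  symmetric e -> (forall v, #|[set w | e v w]| <= d) ->
  percolating e r S -> S != [set: T] ->
  r * #|~: S| + (d - r) <= d * #|S| + (d - r) * #|~: S|.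
Proof.
move=> e_sym e_deg percS; rewrite -subTset => /subsetPn[u _ uS].
pose t := infection_time percS.
have [z _ z_last] := @arg_maxnP _ u predT t isT.
apply: (percolation_count e_sym e_deg (infection_time_earlier_nbrs percS)
          (z := z)) => [|w]; last exact: z_last.
rewrite -(infection_time_eq0 percS) -lt0n; apply: leq_trans (z_last u isT).
by rewrite lt0n infection_time_eq0.
Qed.

Definition necklace_shift k (i : 'I_k) (p q : 'I_4) : 'I_k :=
  if (p <= 1) && (q <= 1) then (if p == 0 :> nat then ordS i else ord_pred i) else i.

Lemma necklace_adjE k (i j : 'I_k) (p q : 'I_4) :
  necklace_adj (i, p) (j, q) = (p != q) && (j == necklace_shift i p q).
Proof.
rewrite /necklace_adj /necklace_shift.
case: p q => -[|[|[|[|//]]]] hp [[|[|[|[|//]]]] hq];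
  rewrite /= ?andbT ?andbF ?orbF //= ?(eq_sym i).
by rewrite -(can2_eq (@ordSK k) (@ord_predK k)) eq_sym.
Qed.

Lemma necklace_adj_sym k : symmetric (@necklace_adj k).
Proof.
move=> [i p] [j q]; rewrite !necklace_adjE eq_sym /necklace_shift.
case: p q => -[|[|[|[|//]]]] hp [[|[|[|[|//]]]] hq]; rewrite //= ?(eq_sym i).
  by rewrite eq_sym (can2_eq (@ordSK k) (@ord_predK k)).
by rewrite (can2_eq (@ordSK k) (@ord_predK k)) eq_sym.
Qed.

Lemma necklace_nbrs k (i : 'I_k) (p : 'I_4) :
  [set w | necklace_adj (i, p) w] \subset [set (necklace_shift i p q, q) | q in [set~ p]].
Proof.
apply/subsetP => -[j q]; rewrite inE necklace_adjE => /andP[neq_pq /eqP->].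
by apply: imset_f; rewrite !inE eq_sym.
Qed.

Lemma necklace_deg k (v : 'I_k * 'I_4) : #|[set w | necklace_adj v w]| <= 3.
Proof.
case: v => i p; apply: leq_trans (subset_leq_card (necklace_nbrs i p)) _.
by apply: leq_trans (leq_imset_card _ _) _; rewrite cardsC1 card_ord.
Qed.

Lemma ordS_ind n (P : 'I_n.+1 -> Prop) :
  P ord0 -> (forall i, P i -> P (ordS i)) -> forall i, P i.
Proof.
move=> P0 PS [m lt_m]; elim: m lt_m => [|m IHm] lt_m.
  by rewrite (_ : Ordinal lt_m = ord0) //; apply: val_inj.
have -> : Ordinal lt_m = ordS (Ordinal (ltnW lt_m)) by apply: val_inj; rewrite /= modn_small.
exact/PS/IHm.
Qed.

Local Notation role n := (@Ordinal 4 n isT).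

Definition necklace_seed k : {set 'I_k.+1 * 'I_4} :=
  (ord0, role 3) |: [set (i, role 2) | i : 'I_k.+1].

Lemma card_necklace_seed k : #|necklace_seed k| = k.+2.
Proof.
have fresh : (ord0, role 3) \notin [set (i, role 2) | i : 'I_k.+1].
  by apply/imsetP => -[i _ []].
by rewrite cardsU1 fresh card_imset ?card_ord // => i j [].
Qed.

Lemma necklace_seed_percolating k : percolating (@necklace_adj k.+1) 2 (necklace_seed k).
Proof.
rewrite /percolating; set C := perc_closure _ _ _.
have c_in i : (i, role 2) \in C.
  by apply: (subsetP (subset_perc_closure _ _ _)); rewrite !inE imset_f ?orbT.
have d0_in : (ord0, role 3) \in C.
  by apply: (subsetP (subset_perc_closure _ _ _)); rewrite !inE eqxx.
have fill_from_d i : (i, role 3) \in C -> forall p, (i, p) \in C.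
  move=> d_in; case=> -[|[|[|[|//]]]] hp; rewrite (bool_irrelevance hp isT) //;
  by apply: (mem_perc_closure2 (x := (i, role 2)) (y := (i, role 3))) => //;
     rewrite ?necklace_adjE /necklace_shift /= ?xpair_eqE ?eqxx.
have d_from_b i : (i, role 1) \in C -> (i, role 3) \in C.
  move=> b_in; apply: (mem_perc_closure2 (x := (i, role 1)) (y := (i, role 2))) => //;
  by rewrite ?necklace_adjE /necklace_shift /= ?xpair_eqE ?eqxx.
have b_from_prev_a i : (i, role 0) \in C -> (ordS i, role 1) \in C.
  move=> a_in; apply: (mem_perc_closure2 (x := (i, role 0)) (y := (ordS i, role 2))) => //;
  by rewrite ?necklace_adjE /necklace_shift /= ?xpair_eqE ?eqxx ?ordSK ?andbF.
have all_in : forall i p, (i, p) \in C.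
  apply: ordS_ind => [|i in_i]; first exact: fill_from_d.
  exact/fill_from_d/d_from_b/b_from_prev_a/in_i.
by apply/eqP/setP => -[i p]; rewrite inE all_in.
Qed.

Theorem proposition4p1 (k : nat) (hk : 2 <= k) :
  m_perc (@necklace_adj k) 2 = k.+1.
Proof.
case: k hk => [|k] // _.
have card_V : #|{: 'I_k.+1 * 'I_4}| = 4 * k.+1 by rewrite card_prod !card_ord mulnC.
apply/eqP; rewrite eqn_leq; apply/andP; split.
  by rewrite -(card_necklace_seed k) m_perc_le ?necklace_seed_percolating.
apply: m_perc_ge => [|S percS]; first by rewrite card_V; lia.
have [->|S_proper] := eqVneq S setT; first by rewrite cardsT card_V; lia.
have := percolating_card_lb (@necklace_adj_sym _) (@necklace_deg _) percS S_proper.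
have := cardsC S; rewrite card_V; lia.
Qed.
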